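(* Let $\mathcal C$ be an operadic category with set of objects $C$. Then the following data form a skew monoidal category $\mathrm{Coll}_{\mathcal C}(\mathbf{Set})$: the underlying category $\mathbf{Set}/C$; the tensor product $*$ with $(X*Y)_c=\sum_{\varphi:c\to d}X_d\times\prod_{i\in|d|}Y_{\varphi^{-1}i}$; the unit $U$ given by the set of trivial objects with its inclusion into $C$; and the structure maps $\alpha:(X*Y)*Z\to X*(Y*Z)$, $\alpha(x,\psi,y,\varphi,z)=(x,\psi\varphi,y,\varphi^\psi,z)$; $\lambda:U*X\to X$, $\lambda(u,\varphi,x)=x$; $\rho:X\to X*U$, $\rho(x)=(x,1_{\partial x},(1_{\partial x}^{-1}i)_{i\in|\partial x|})$.
   Context: Operadic categories: $\mathcal S$ is a skeleton of finite sets (objects $\mathbb N$), with fixed equivalences $R_I:\mathcal S/I\to\mathcal S^I$ sending $f:J\to I$ to its fibres. An operadic category is a category $\mathcal C$ with a functor $|\cdot|:\mathcal C\to\mathcal S$ and functors $R_c:\mathcal C/c\to\mathcal C^{|c|}$ with $|\cdot|^{|c|}\circ R_c=R_{|c|}\circ(|\cdot|/c)$; the fibre $\psi^{-1}i$ of $\psi:c\to d$ at $i\in|d|$ is the $i$-th component of $R_d(\psi)$ (so $|\psi^{-1}i|=|\psi|^{-1}i$); for $\varphi:b\to c,\psi:c\to d$, $\varphi^\psi:R_d(\psi\varphi)\to R_d(\psi)$ is $R_d$ applied to $\varphi:\psi\varphi\to\psi$ in $\mathcal C/d$, with components $\varphi^\psi_j:(\psi\varphi)^{-1}j\to\psi^{-1}j$;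 $u$ is trivial if $|u|=1$ and $R_u=\mathrm{dom}$. Axioms: fibres of identities are trivial; double slice condition: for $\psi:c\to d$, $R_c\circ(\mathrm{dom}/\psi)=(\cong)\circ(\prod_jR_{\psi^{-1}j})\circ(R_d/\psi)$ as functors $(\mathcal C/d)/\psi\to\mathcal C^{|c|}$, using $\mathcal C^{|d|}/R_d\psi\cong\prod_j\mathcal C/\psi^{-1}j$ and $\prod_j\mathcal C^{|\psi^{-1}j|}\cong\mathcal C^{|c|}$ via $|c|\cong\sum_j|\psi|^{-1}j$. Notation: an object of $\mathbf{Set}/C$ is a set $X$ with $\partial:X\to C$, and $X_c=\partial^{-1}(c)$. An element of $(X*Y)_c$ is written $(x,\varphi,y)$ with $\varphi:c\to d$, $x\in X_d$, $y=(y_i)_{i\in|d|}$, $y_i\in Y_{\varphi^{-1}i}$, and $\partial(x,\varphi,y)=c$. An element of $((X*Y)*Z)_c$ is written $(x,\psi,y,\varphi,z)$ with $\varphi:c\to d$, $\psi:d\to e$, $x\in X_e$, $y_j\in Y_{\psi^{-1}j}$ ($j\in|e|$), $z_i\in Z_{\varphi^{-1}i}$ ($i\in|d|$); its image $(x,\psi\varphi,y,\varphi^\psi,z)$ denotes the element of $X*(Y*Z)$ whose $j$-th component in $Y*Z$ is $(y_j,\varphi^\psi_j,(z_i)_{i\in|\psi^{-1}j|})$. In $U*X$ an element has form $(u,\varphi,x)$ with $\varphi:c\to u$, $u$ trivial, $x\in X_c$ (the unique fibre of $\varphi$ being $c$). A skew monoidal category is a category $\mathcal E$ with a functor $*:\mathcal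 E\times\mathcal E\to\mathcal E$, an object $U$, and natural (not necessarily invertible) maps $\alpha:(X*Y)*Z\to X*(Y*Z)$, $\lambda:U*X\to X$, $\rho:X\to X*U$ satisfying: $\lambda_U\rho_U=1_U$; $\lambda_{X*Y}\alpha_{U,X,Y}=\lambda_X*1_Y$; $\alpha_{X,Y,U}\rho_{X*Y}=1_X*\rho_Y$; $(1_X*\lambda_Y)\alpha_{X,U,Y}(\rho_X*1_Y)=1_{X*Y}$; and the pentagon $(1*\alpha)\alpha(\alpha*1)=\alpha\alpha$ as maps $((W*X)*Y)*Z\to W*(X*(Y*Z))$. *)

From HB Require Import structures.
From mathcomp Require Import all_boot.

Set Implicit Arguments.
Unset Strict Implicit.
Unset Printing Implicit Defensive.

(* The skeleton S of finite sets: objects are nats n (standing for 'I_n),   *)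
(* morphisms 'I_m -> 'I_n are represented by functions g : nat -> nat,      *)
(* only their values on [0, m) being relevant.                              *)
(* The fixed equivalence R_I : S/I -> S^I sends g : J -> I to its fibres,   *)
(* where the fibre g^{-1} i is identified with 'I_(#g^{-1} i) via the       *)
(* ORDER-PRESERVING enumeration.  [fibre g m i] is the increasing list of   *)
(* the elements of g^{-1} i (for g : 'I_m -> _); its l-th element is        *)
(* [nth 0 (fibre g m i) l], and the position of k in its fibre is           *)
(* [index k (fibre g m (g k))].                                             *)
Definition fibre (g : nat -> nat) (m i : nat) : seq nat :=
  [seq k <- iota 0 m | g k == i].

(* Data of an operadic category, with the category presented single-sorted: *)
(* a type of objects, a type of arrows with dom/cod, identities and a       *)
(* (total) composition [cmp g f] = g \o f, meaningful when cod f = dom g.   *)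
(*   card c        = |c|                                                    *)
(*   cardf f       = |f| : 'I_|dom f| -> 'I_|cod f|                         *)
(*   fib f i       = f^{-1} i         (i < |cod f|)                         *)
(*   fibm phi psi i = phi^psi_i : (psi phi)^{-1} i -> psi^{-1} i            *)
(*                   i.e. R_d applied to phi : psi phi -> psi in C/d.       *)
Record opdata := OpData {
  Obj : Type;
  Arr : Type;
  dom : Arr -> Obj;
  cod : Arr -> Obj;
  idA : Obj -> Arr;
  cmp : Arr -> Arr -> Arr;
  card : Obj -> nat;
  cardf : Arr -> nat -> nat;
  fib : Arr -> nat -> Obj;
  fibm : Arr -> Arr -> nat -> Arr
}.

Section OperadicCategory.
Variable C : opdata.
Local Notation Obj := (Obj C).
Local Notation Arr := (Arr C).
Local Notation dom := (@dom C).
Local Notation cod := (@cod C).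
Local Notation idA := (@idA C).
Local Notation cmp := (@cmp C).
Local Notation card := (@card C).
Local Notation cardf := (@cardf C).
Local Notation fib := (@fib C).
Local Notation fibm := (@fibm C).

(* u is trivial: |u| = 1 and R_u = dom : C/u -> C^1 = C. *)
Definition trivial (u : Obj) : Prop :=
  [/\ card u = 1,
      (forall f, cod f = u -> fib f 0 = dom f) &
      (forall theta f, cod f = u -> cod theta = dom f -> fibm theta f 0 = theta)].

Record is_opcat : Prop := {
  dom_id : forall c, dom (idA c) = c;
  cod_id : forall c, cod (idA c) = c;
  dom_cmp : forall f g, cod f = dom g -> dom (cmp g f) = dom f;
  cod_cmp : forall f g, cod f = dom g -> cod (cmp g f) = cod g;
  cmp_idl : forall f, cmp (idA (cod f)) f = f;
  cmp_idr : forall f, cmp f (idA (dom f)) = f;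
  cmpA : forall f g h, cod f = dom g -> cod g = dom h ->
           cmp h (cmp g f) = cmp (cmp h g) f;
  cardf_bound : forall f i, i < card (dom f) -> cardf f i < card (cod f);
  cardf_id : forall c i, i < card c -> cardf (idA c) i = i;
  cardf_cmp : forall f g i, cod f = dom g -> i < card (dom f) ->
           cardf (cmp g f) i = cardf g (cardf f i);
  dom_fibm : forall phi psi i, cod phi = dom psi -> i < card (cod psi) ->
           dom (fibm phi psi i) = fib (cmp psi phi) i;
  cod_fibm : forall phi psi i, cod phi = dom psi -> i < card (cod psi) ->
           cod (fibm phi psi i) = fib psi i;
  fibm_id : forall psi i, i < card (cod psi) ->
           fibm (idA (dom psi)) psi i = idA (fib psi i);
  fibm_cmp : forall theta phi psi i,
           cod theta = dom phi -> cod phi = dom psi -> i < card (cod psi) ->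
           fibm (cmp phi theta) psi i
           = cmp (fibm phi psi i) (fibm theta (cmp psi phi) i);
  (* |.|^|d| o R_d = R_|d| o (|.|/d), on objects and on morphisms *)
  card_fib : forall f i, i < card (cod f) ->
           card (fib f i) = size (fibre (cardf f) (card (dom f)) i);
  cardf_fibm : forall phi psi i l,
           cod phi = dom psi -> i < card (cod psi) ->
           l < card (fib (cmp psi phi) i) ->
           cardf (fibm phi psi i) l
           = index (cardf phi (nth 0 (fibre (cardf (cmp psi phi))
                                             (card (dom phi)) i) l))
                   (fibre (cardf psi) (card (dom psi)) i);
  fib_id_trivial : forall c i, i < card c -> trivial (fib (idA c) i);
  (* double slice condition, on objects and on morphisms; k in |c| corresponds
     to (j, l) = (|psi| k, position of k in |psi|^{-1} j) *)
  double_slice_ob : forall phi psi k,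
           cod phi = dom psi -> k < card (cod phi) ->
           fib phi k
           = fib (fibm phi psi (cardf psi k))
                 (index k (fibre (cardf psi) (card (dom psi)) (cardf psi k)));
  double_slice_mor : forall theta phi psi k,
           cod theta = dom phi -> cod phi = dom psi -> k < card (cod phi) ->
           fibm theta phi k
           = fibm (fibm theta (cmp psi phi) (cardf psi k))
                  (fibm phi psi (cardf psi k))
                  (index k (fibre (cardf psi) (card (dom psi)) (cardf psi k)))
}.

Record SetOver := { carrier :> Type; bd : carrier -> Obj }.

Record Hom (X Y : SetOver) := {
  hfun :> X -> Y;
  hbd : forall x, bd (hfun x) = bd x }.

Definition idH (X : SetOver) : Hom X X := @Build_Hom X X id (fun _ => erefl).

Definition cmpH (X Y Z : SetOver) (g : Hom Y Z) (f : Hom X Y) : Hom X Z :=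
  @Build_Hom X Z (fun x => g (f x))
    (fun x => etrans (hbd g (f x)) (hbd f x)).

Definition heq (X Y : SetOver) (f g : Hom X Y) : Prop := forall x, f x = g x.

(* Elements of (X*Y)_c : (x, phi, y) with phi : c -> d, x in X_d,
   y_i in Y_{phi^{-1} i} for i in |d|.  Here t_arr = phi, and c = dom phi. *)
Record tens_el (X Y : SetOver) := TensEl {
  t_arr : Arr;
  t_x : X;
  t_y : 'I_(card (cod t_arr)) -> Y;
  t_xbd : bd t_x = cod t_arr;
  t_ybd : forall i : 'I_(card (cod t_arr)), bd (t_y i) = fib t_arr i }.
Arguments t_arr {X Y} t.
Arguments t_x {X Y} t.
Arguments t_y {X Y} t i.
Arguments t_xbd {X Y} t.
Arguments t_ybd {X Y} t i.

Definition tens (X Y : SetOver) : SetOver :=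
  {| carrier := tens_el X Y; bd := fun e => dom (t_arr e) |}.

Definition tensH (X X' Y Y' : SetOver) (f : Hom X X') (g : Hom Y Y')
  : Hom (tens X Y) (tens X' Y').
Proof.
refine (@Build_Hom (tens X Y) (tens X' Y')
  (fun e : tens_el X Y =>
     @TensEl X' Y' (t_arr e) (f (t_x e)) (fun i => g (t_y e i)) _ _)
  (fun _ => erefl)).
- exact: etrans (hbd f _) (t_xbd e).
- move=> i; exact: etrans (hbd g _) (t_ybd e i).
Defined.

Definition Uob : SetOver :=
  {| carrier := {u : Obj | trivial u}; bd := fun u => proj1_sig u |}.

Definition skew_monoidal
  (alpha : forall X Y Z : SetOver, Hom (tens (tens X Y) Z) (tens X (tens Y Z)))
  (lam : forall X : SetOver, Hom (tens Uob X) X)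
  (rho : forall X : SetOver, Hom X (tens X Uob)) : Prop :=

      (forall X Y, heq (tensH (idH X) (idH Y)) (idH (tens X Y))) /\
      (forall X X' X'' Y Y' Y'' (f : Hom X X') (f' : Hom X' X'')
              (g : Hom Y Y') (g' : Hom Y' Y''),
          heq (tensH (cmpH f' f) (cmpH g' g)) (cmpH (tensH f' g') (tensH f g))) /\
      (forall X X' Y Y' Z Z' (f : Hom X X') (g : Hom Y Y') (h : Hom Z Z'),
          heq (cmpH (alpha X' Y' Z') (tensH (tensH f g) h))
              (cmpH (tensH f (tensH g h)) (alpha X Y Z))) /\
      (forall X X' (f : Hom X X'),
          heq (cmpH (lam X') (tensH (idH Uob) f)) (cmpH f (lam X))) /\
      (forall X X' (f : Hom X X'),
          heq (cmpH (rho X') f) (cmpH (tensH f (idH Uob)) (rho X))) /\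
      heq (cmpH (lam Uob) (rho Uob)) (idH Uob) /\
      (forall X Y, heq (cmpH (lam (tens X Y)) (alpha Uob X Y))
                       (tensH (lam X) (idH Y))) /\
      (forall X Y, heq (cmpH (alpha X Y Uob) (rho (tens X Y)))
                       (tensH (idH X) (rho Y))) /\
          (forall X Y, heq (cmpH (tensH (idH X) (lam Y))
                              (cmpH (alpha X Uob Y) (tensH (rho X) (idH Y))))
                           (idH (tens X Y))) /\
          (forall W X Y Z,
             heq (cmpH (tensH (idH W) (alpha X Y Z))
                   (cmpH (alpha W (tens X Y) Z) (tensH (alpha W X Y) (idH Z))))
                 (cmpH (alpha W X (tens Y Z)) (alpha (tens W X) Y Z))).

(* The formulas defining alpha, lambda, rho.
   alpha(x, psi, y, phi, z) = (x, psi phi, y, phi^psi, z): the j-th component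
   in Y*Z is (y_j, phi^psi_j, (z_k)_{k in |psi|^{-1} j}), the l-th element of
   the (order-preserving) enumeration of |psi|^{-1} j being z_k for k the
   l-th element of the fibre of |psi| over j. *)
Definition alpha_formula
  (alpha : forall X Y Z : SetOver, Hom (tens (tens X Y) Z) (tens X (tens Y Z)))
  : Prop :=
  forall (X Y Z : SetOver) (e : tens_el (tens X Y) Z),
    let phi := t_arr e in
    let e1 : tens_el X Y := t_x e in
    let psi := t_arr e1 in
    let f : tens_el X (tens Y Z) := alpha X Y Z e in
    [/\ t_arr f = cmp psi phi,
        t_x f = t_x e1 &
        forall (j : 'I_(card (cod (t_arr f)))) (j' : 'I_(card (cod psi))),
          nat_of_ord j = nat_of_ord j' ->
          let g : tens_el Y Z := t_y f j in
          [/\ t_arr g = fibm phi psi j,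
              t_x g = t_y e1 j' &
              forall (l : 'I_(card (cod (t_arr g)))) (k : 'I_(card (cod phi))),
                nat_of_ord k = nth 0 (fibre (cardf psi) (card (dom psi)) j) l ->
                t_y g l = t_y e k]].

(* lambda(u, phi, x) = x, x being the unique component of the family. *)
Definition lam_formula (lam : forall X : SetOver, Hom (tens Uob X) X) : Prop :=
  forall (X : SetOver) (e : tens_el Uob X) (i : 'I_(card (cod (t_arr e)))),
    lam X e = t_y e i.

Definition rho_formula (rho : forall X : SetOver, Hom X (tens X Uob)) : Prop :=
  forall (X : SetOver) (x : X),
    let f : tens_el X Uob := rho X x in
    [/\ t_arr f = idA (bd x),
        t_x f = x &
        forall i : 'I_(card (cod (t_arr f))),
          proj1_sig (t_y f i) = fib (idA (bd x)) i].

End OperadicCategory.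

From Pilot Require Import Defs.
From HB Require Import structures.
From mathcomp Require Import all_boot.
From Stdlib Require Import FunctionalExtensionality ProofIrrelevance.

Set Implicit Arguments.
Unset Strict Implicit.
Unset Printing Implicit Defensive.

(* A tensor element is determined by its arrow, its first component and its
   family of components, so each axiom is checked level by level in the
   nested families.  At the level of arrows the axioms are the category laws;
   one level down they are the functoriality of R_d (fibres of identities and
   of composites); one level further the double slice condition identifies the
   fibres of phi with those of the induced maps phi^psi_j.  What remains is
   bookkeeping of indices: the fibres of the map induced by |phi| from the
   fibres of |psi phi| to those of |psi| are the fibres of |phi|.  The unit
   maps only involve trivial objects, whose fibre functor is dom, and fibres
   of identities, which are trivial. *)

Section Fibres.
Variables (g : nat -> nat) (m : nat).

Lemma fibre_uniq i : uniq (fibre g m i).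
Proof. by rewrite filter_uniq // iota_uniq. Qed.

Lemma mem_fibre i k : (k \in fibre g m i) = (k < m) && (g k == i).
Proof. by rewrite mem_filter mem_iota add0n andbC. Qed.

Lemma nth_fibre_ltn i l : l < size (fibre g m i) -> nth 0 (fibre g m i) l < m.
Proof. by move=> /(mem_nth 0); rewrite mem_fibre => /andP[]. Qed.

Lemma nth_fibre_over i l : l < size (fibre g m i) -> g (nth 0 (fibre g m i) l) = i.
Proof. by move=> /(mem_nth 0); rewrite mem_fibre => /andP[_ /eqP]. Qed.

Lemma index_nth_fibre i l : l < size (fibre g m i) ->
  index (nth 0 (fibre g m i) l) (fibre g m i) = l.
Proof. by move=> ltl; rewrite index_uniq // fibre_uniq. Qed.

Lemma fibre_const i : (forall k, k < m -> g k = i) -> fibre g m i = iota 0 m.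
Proof.
move=> gi; apply/all_filterP/allP => k.
by rewrite mem_iota add0n => /andP[_ /gi /= ->].
Qed.

Lemma fibre_id j : (forall k, k < m -> g k = k) -> j < m -> fibre g m j = [:: j].
Proof.
move=> gid ltjm; rewrite /fibre (@eq_in_filter _ _ (pred1 j)).
  by rewrite filter_pred1_uniq ?iota_uniq // mem_iota add0n.
by move=> k; rewrite mem_iota add0n => /andP[_ /gid /= ->].
Qed.

End Fibres.

(* [h] is [g \o f] on [0, c) and [r] is the map induced by [f] from the fibre
   of [h] over [j] to that of [g], both fibres being read through their
   increasing enumerations. *)
Lemma fibre_fibrewise_map (f g h r : nat -> nat) c d j m :
  (forall i, i < c -> f i < d) ->
  (forall i, i < c -> h i = g (f i)) ->
  (forall l, l < size (fibre h c j) ->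
     r l = index (f (nth 0 (fibre h c j) l)) (fibre g d j)) ->
  m < size (fibre g d j) ->
  map (nth 0 (fibre h c j)) (fibre r (size (fibre h c j)) m)
  = fibre f c (nth 0 (fibre g d j) m).
Proof.
move=> fcd hgf rE ltm; set A := fibre h c j; set k := nth 0 (fibre g d j) m.
have r_over l : l < size A -> (r l == m) = (f (nth 0 A l) == k).
  move=> ltl; have : nth 0 A l \in A by exact: mem_nth.
  rewrite mem_fibre => /andP[ltc /eqP hj].
  have fk : f (nth 0 A l) \in fibre g d j.
    by rewrite mem_fibre fcd // -hj hgf // eqxx.
  rewrite rE // /k; apply/eqP/eqP => [<- | ->]; first by rewrite nth_index.
  exact: index_nth_fibre.
rewrite /fibre (eq_in_filter (a2 := fun l => f (nth 0 A l) == k)); last first.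
  by move=> l; rewrite mem_iota add0n => /andP[_ /r_over].
rewrite -(filter_map (nth 0 A) (fun i => f i == k)) -/(mkseq _ _) mkseq_nth.
rewrite /A /fibre -filter_predI.
apply: eq_in_filter => i; rewrite mem_iota add0n => /andP[_ ltic] /=.
have [fik | //] := eqVneq (f i) k.
by rewrite hgf // fik nth_fibre_over ?eqxx.
Qed.

Section OperadicCategoryFacts.
Variable C : opdata.
Hypothesis HC : is_opcat C.
Local Notation card := (@Defs.card C).
Implicit Types theta phi psi : Arr C.

Lemma card_cod_fibm phi psi j : cod phi = dom psi -> j < card (cod psi) ->
  card (cod (fibm phi psi j)) = size (fibre (cardf psi) (card (dom psi)) j).
Proof.
by move=> phi_psi ltj; rewrite (cod_fibm HC phi_psi ltj) (card_fib HC ltj).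
Qed.

Lemma card_dom_fibm phi psi j : cod phi = dom psi -> j < card (cod psi) ->
  card (dom (fibm phi psi j))
  = size (fibre (cardf (cmp psi phi)) (card (dom phi)) j).
Proof.
move=> phi_psi ltj.
rewrite (dom_fibm HC phi_psi ltj) (card_fib HC) ?(dom_cmp HC) //.
by rewrite (cod_cmp HC).
Qed.

Lemma fibm_composable theta phi psi j :
  cod theta = dom phi -> cod phi = dom psi -> j < card (cod psi) ->
  cod (fibm theta (cmp psi phi) j) = dom (fibm phi psi j).
Proof.
move=> theta_phi phi_psi ltj; rewrite (dom_fibm HC phi_psi ltj) (cod_fibm HC) //.
  by rewrite (dom_cmp HC).
by rewrite (cod_cmp HC).
Qed.

Lemma double_slice_ob_nth phi psi j l :
  cod phi = dom psi -> j < card (cod psi) ->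
  l < size (fibre (cardf psi) (card (dom psi)) j) ->
  fib phi (nth 0 (fibre (cardf psi) (card (dom psi)) j) l) = fib (fibm phi psi j) l.
Proof.
move=> phi_psi ltj ltl; rewrite (double_slice_ob HC phi_psi).
  by rewrite nth_fibre_over // index_nth_fibre.
by rewrite phi_psi nth_fibre_ltn.
Qed.

Lemma double_slice_mor_nth theta phi psi j l :
  cod theta = dom phi -> cod phi = dom psi -> j < card (cod psi) ->
  l < size (fibre (cardf psi) (card (dom psi)) j) ->
  fibm theta phi (nth 0 (fibre (cardf psi) (card (dom psi)) j) l)
  = fibm (fibm theta (cmp psi phi) j) (fibm phi psi j) l.
Proof.
move=> theta_phi phi_psi ltj ltl; rewrite (double_slice_mor HC theta_phi phi_psi).
  by rewrite nth_fibre_over // index_nth_fibre.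
by rewrite phi_psi nth_fibre_ltn.
Qed.

Lemma nth_fibre_fibm phi psi j m n :
  cod phi = dom psi -> j < card (cod psi) ->
  m < size (fibre (cardf psi) (card (dom psi)) j) ->
  n < size (fibre (cardf (fibm phi psi j)) (card (dom (fibm phi psi j))) m) ->
  nth 0 (fibre (cardf (cmp psi phi)) (card (dom phi)) j)
        (nth 0 (fibre (cardf (fibm phi psi j)) (card (dom (fibm phi psi j))) m) n)
  = nth 0 (fibre (cardf phi) (card (dom phi))
                 (nth 0 (fibre (cardf psi) (card (dom psi)) j) m)) n.
Proof.
move=> phi_psi ltj ltm; rewrite (card_dom_fibm phi_psi ltj) => ltn.
rewrite -(fibre_fibrewise_map (h := cardf (cmp psi phi))
                              (r := cardf (fibm phi psi j))) ?(nth_map 0) //.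
- by move=> i lti; rewrite -phi_psi (cardf_bound HC).
- by move=> i lti; rewrite (cardf_cmp HC).
have ltj' : j < card (cod (cmp psi phi)) by rewrite (cod_cmp HC).
by move=> l ltl; rewrite (cardf_fibm HC) // (card_fib HC ltj') (dom_cmp HC).
Qed.

End OperadicCategoryFacts.

Lemma ord_congr T n (f : 'I_n -> T) (i1 i2 : 'I_n) : i1 = i2 :> nat -> f i1 = f i2.
Proof. by move=> /val_inj ->. Qed.

Arguments t_y {C X Y} t i.
Arguments t_ybd {C X Y} t i.

Section Collections.
Variable C : opdata.
Hypothesis HC : is_opcat C.
Local Notation card := (@Defs.card C).

Lemma tens_el_ext (X Y : SetOver C) (e1 e2 : tens_el X Y) :
  t_arr e1 = t_arr e2 -> t_x e1 = t_x e2 ->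
  (forall (i1 : 'I_(card (cod (t_arr e1)))) (i2 : 'I_(card (cod (t_arr e2)))),
     i1 = i2 :> nat -> t_y e1 i1 = t_y e2 i2) ->
  e1 = e2.
Proof.
case: e1 e2 => [a x y xbd ybd] [a' x' y' xbd' ybd'] /= aa' xx' yy'.
subst a' x'.
have yy : y = y' by apply: functional_extensionality => i; exact: yy'.
subst y'.
by congr TensEl; apply: proof_irrelevance.
Qed.

Lemma unit_eq (u v : Uob C) : proj1_sig u = proj1_sig v -> u = v.
Proof. by apply: eq_sig_hprop => ? ? ?; apply: proof_irrelevance. Qed.

Lemma trivial_cod_unit (X : SetOver C) (e : tens_el (Uob C) X) :
  trivial (cod (t_arr e)).
Proof. by rewrite -(t_xbd e); case: (t_x e). Qed.

Lemma card_cod_unit (X : SetOver C) (e : tens_el (Uob C) X) :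
  card (cod (t_arr e)) = 1.
Proof. by case: (trivial_cod_unit e). Qed.

Lemma trivial_fib_id c (i : 'I_(card (cod (idA c)))) : trivial (fib (idA c) i).
Proof. by apply: (fib_id_trivial HC); case: i => i /=; rewrite (cod_id HC). Qed.

Definition lam_fun (X : SetOver C) (e : tens_el (Uob C) X) : X :=
  t_y e (cast_ord (esym (card_cod_unit e)) ord0).

Lemma lam_bd (X : SetOver C) (e : tens_el (Uob C) X) :
  bd (lam_fun e) = dom (t_arr e).
Proof. by rewrite (t_ybd e); case: (trivial_cod_unit e) => _ ->. Qed.

Definition lam (X : SetOver C) : Hom (tens (Uob C) X) X :=
  @Build_Hom C (tens (Uob C) X) X (@lam_fun X) (@lam_bd X).

Definition rho_fun (X : SetOver C) (x : X) : tens_el X (Uob C) :=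
  @TensEl C X (Uob C) (idA (bd x)) x
    (fun i => exist _ (fib (idA (bd x)) i) (trivial_fib_id i))
    (esym (cod_id HC _)) (fun _ => erefl).

Definition rho (X : SetOver C) : Hom X (tens X (Uob C)) :=
  @Build_Hom C X (tens X (Uob C)) (@rho_fun X) (fun x => dom_id HC (bd x)).

Section Associator.
Variables (X Y Z : SetOver C) (e : tens_el (tens X Y) Z).
Local Notation phi := (t_arr e).
Local Notation psi := (t_arr (t_x e)).

Lemma tens_composable : cod phi = dom psi.
Proof. exact: esym (t_xbd e). Qed.

Lemma alpha_index_ltn j (ltj : j < card (cod psi))
    (l : 'I_(card (cod (fibm phi psi j)))) :
  nth 0 (fibre (cardf psi) (card (dom psi)) j) l < card (cod phi).
Proof.
by rewrite tens_composable nth_fibre_ltn // -(card_cod_fibm HC tens_composable ltj).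
Qed.

Lemma alpha_inner_xbd j (ltj : j < card (cod psi)) :
  bd (t_y (t_x e) (Ordinal ltj)) = cod (fibm phi psi j).
Proof. by rewrite (t_ybd (t_x e)) (cod_fibm HC tens_composable ltj). Qed.

Lemma alpha_inner_ybd j (ltj : j < card (cod psi))
    (l : 'I_(card (cod (fibm phi psi j)))) :
  bd (t_y e (Ordinal (alpha_index_ltn ltj l))) = fib (fibm phi psi j) l.
Proof.
rewrite (t_ybd e) (double_slice_ob_nth HC tens_composable ltj) //.
by rewrite -(card_cod_fibm HC tens_composable ltj).
Qed.

Definition alpha_inner j (ltj : j < card (cod psi)) : tens_el Y Z :=
  @TensEl C Y Z (fibm phi psi j) (t_y (t_x e) (Ordinal ltj))
    (fun l => t_y e (Ordinal (alpha_index_ltn ltj l)))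
    (alpha_inner_xbd ltj) (alpha_inner_ybd ltj).

Lemma alpha_outer_ltn (j : 'I_(card (cod (cmp psi phi)))) : j < card (cod psi).
Proof. by case: j => j /=; rewrite (cod_cmp HC tens_composable). Qed.

Lemma alpha_outer_xbd : bd (t_x (t_x e)) = cod (cmp psi phi).
Proof. by rewrite (t_xbd (t_x e)) (cod_cmp HC tens_composable). Qed.

Lemma alpha_outer_ybd (j : 'I_(card (cod (cmp psi phi)))) :
  bd (s := tens Y Z) (alpha_inner (alpha_outer_ltn j)) = fib (cmp psi phi) j.
Proof. exact: (dom_fibm HC tens_composable (alpha_outer_ltn j)). Qed.

Definition alpha_fun : tens_el X (tens Y Z) :=
  @TensEl C X (tens Y Z) (cmp psi phi) (t_x (t_x e))
    (fun j => alpha_inner (alpha_outer_ltn j)) alpha_outer_xbd alpha_outer_ybd.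

Lemma alpha_bd : bd (s := tens X (tens Y Z)) alpha_fun = dom phi.
Proof. exact: (dom_cmp HC tens_composable). Qed.

End Associator.

Definition alpha (X Y Z : SetOver C) :
    Hom (tens (tens X Y) Z) (tens X (tens Y Z)) :=
  @Build_Hom C (tens (tens X Y) Z) (tens X (tens Y Z)) (@alpha_fun X Y Z)
    (@alpha_bd X Y Z).

Lemma alphaE : alpha_formula alpha.
Proof.
by move=> X Y Z e; split=> // j j' jj'; split=> //= [|l k lk]; apply: ord_congr.
Qed.

Lemma lamE : lam_formula lam.
Proof.
move=> X e i; apply: ord_congr; case: i => -[|i] //=.
by rewrite card_cod_unit.
Qed.

Lemma rhoE : rho_formula rho.
Proof. by []. Qed.

End Collections.

Section SkewMonoidalAxioms.
Variable C : opdata.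
Hypothesis HC : is_opcat C.
Local Notation card := (@Defs.card C).
Local Notation U := (Uob C).
Local Notation alpha := (alpha HC).
Local Notation rho := (rho HC).

Lemma tensH_id (X Y : SetOver C) : heq (tensH (idH X) (idH Y)) (idH (tens X Y)).
Proof. by move=> e; apply: tens_el_ext => //= i1 i2; apply: ord_congr. Qed.

Lemma tensH_comp (X X' X'' Y Y' Y'' : SetOver C) (f : Hom X X') (f' : Hom X' X'')
    (g : Hom Y Y') (g' : Hom Y' Y'') :
  heq (tensH (cmpH f' f) (cmpH g' g)) (cmpH (tensH f' g') (tensH f g)).
Proof. by move=> e; apply: tens_el_ext => //= i1 i2 /(ord_congr (t_y e)) ->. Qed.

Lemma alpha_natural (X X' Y Y' Z Z' : SetOver C)
    (f : Hom X X') (g : Hom Y Y') (h : Hom Z Z') :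
  heq (cmpH (alpha X' Y' Z') (tensH (tensH f g) h))
      (cmpH (tensH f (tensH g h)) (alpha X Y Z)).
Proof.
move=> e; apply: tens_el_ext => //= j1 j2 jj.
apply: tens_el_ext => /= [||l1 l2 ll]; first by rewrite jj.
  by congr (g _); apply: ord_congr.
by congr (h _); apply: ord_congr => /=; rewrite ll jj.
Qed.

Lemma lam_natural (X X' : SetOver C) (f : Hom X X') :
  heq (cmpH (lam X') (tensH (idH U) f)) (cmpH f (lam X)).
Proof. by move=> e /=; congr (f _); apply: ord_congr. Qed.

Lemma rho_natural (X X' : SetOver C) (f : Hom X X') :
  heq (cmpH (rho X') f) (cmpH (tensH f (idH U)) (rho X)).
Proof.
move=> x; apply: tens_el_ext => /= [|//|i1 i2 ii]; first by rewrite hbd.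
by apply: unit_eq => /=; rewrite ii hbd.
Qed.

Lemma lam_rho : heq (cmpH (lam U) (rho U)) (idH U).
Proof.
move=> [u triv_u]; apply: unit_eq => /=; case: triv_u => _ fib_u _.
by rewrite fib_u ?(dom_id HC) ?(cod_id HC).
Qed.

Lemma lam_alpha (X Y : SetOver C) :
  heq (cmpH (lam (tens X Y)) (alpha U X Y)) (tensH (lam X) (idH Y)).
Proof.
move=> e; have [_ _ fibm_u] := trivial_cod_unit (t_x e).
have psi_to0 k : k < card (dom (t_arr (t_x e))) -> cardf (t_arr (t_x e)) k = 0.
  by move/(cardf_bound HC); rewrite card_cod_unit; case: cardf.
apply: tens_el_ext => /= [||l1 l2 ll].
- exact: fibm_u _ _ erefl (tens_composable e).
- exact: ord_congr.
have ltl : l1 < card (dom (t_arr (t_x e))) by rewrite ll -(tens_composable e).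
by apply: ord_congr => /=; rewrite fibre_const // nth_iota // ll.
Qed.

Lemma alpha_rho (X Y : SetOver C) :
  heq (cmpH (alpha X Y U) (rho (tens X Y))) (tensH (idH X) (rho Y)).
Proof.
move=> e; set psi := t_arr e.
have id_psi : cod (idA (dom psi)) = dom psi := cod_id HC _.
apply: tens_el_ext => /= [|//|j1 j2 jj]; first exact: (cmp_idr HC).
have ltj : j1 < card (cod psi) by rewrite jj.
apply: tens_el_ext => /= [||l1 l2 ll].
- by rewrite (fibm_id HC ltj) (t_ybd e j2) jj.
- exact: ord_congr.
have ltl : l1 < size (fibre (cardf psi) (card (dom psi)) j1).
  by rewrite -(card_cod_fibm HC id_psi ltj).
apply: unit_eq => /=; rewrite -ll; move: (nat_of_ord l1) ltl => l ltl.
by rewrite (double_slice_ob_nth HC id_psi ltj ltl) (fibm_id HC ltj) (t_ybd e j2) jj.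
Qed.

Lemma lam_alpha_rho (X Y : SetOver C) :
  heq (cmpH (tensH (idH X) (lam Y)) (cmpH (alpha X U Y) (tensH (rho X) (idH Y))))
      (idH (tens X Y)).
Proof.
move=> e; apply: tens_el_ext => /= [|//|j1 j2 jj].
  by rewrite (t_xbd e) (cmp_idl HC).
have ltj : j1 < card (bd (t_x e)) by rewrite jj (t_xbd e).
apply: ord_congr => /=; rewrite -jj; move: (nat_of_ord j1) ltj => j ltj.
by rewrite (dom_id HC) fibre_id // => k; apply: (cardf_id HC).
Qed.

Lemma pentagon (W X Y Z : SetOver C) :
  heq (cmpH (tensH (idH W) (alpha X Y Z))
            (cmpH (alpha W (tens X Y) Z) (tensH (alpha W X Y) (idH Z))))
      (cmpH (alpha W X (tens Y Z)) (alpha (tens W X) Y Z)).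
Proof.
move=> e.
set theta := t_arr e; set phi := t_arr (t_x e); set psi := t_arr (t_x (t_x e)).
have theta_phi : cod theta = dom phi := tens_composable e.
have phi_psi : cod phi = dom psi := tens_composable (t_x e).
have phitheta_psi : cod (cmp phi theta) = dom psi by rewrite (cod_cmp HC).
apply: tens_el_ext => /= [|//|j1 j2 jj]; first by rewrite (cmpA HC).
have ltj : j1 < card (cod psi) by rewrite jj -(cod_cmp HC phitheta_psi).
apply: tens_el_ext => /= [||m1 m2 mm].
- by rewrite -jj (fibm_cmp HC theta_phi phi_psi ltj).
- exact: ord_congr.
have ltm : m1 < size (fibre (cardf psi) (card (dom psi)) j1).
  by rewrite mm -(card_cod_fibm HC phitheta_psi ltj) jj.
apply: tens_el_ext => /= [||n1 n2 nn].
- by rewrite -mm -jj (double_slice_mor_nth HC theta_phi phi_psi ltj ltm).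
- by apply: ord_congr; rewrite /= -mm -jj.
have comp_j := fibm_composable HC theta_phi phi_psi ltj.
have ltn : n1 < size (fibre (cardf (fibm phi psi j1))
                            (card (dom (fibm phi psi j1))) m1).
  by rewrite -(card_cod_fibm HC comp_j) // (card_cod_fibm HC phi_psi ltj).
apply: ord_congr => /=; rewrite -nn -mm -jj (dom_cmp HC phi_psi).
by rewrite (nth_fibre_fibm HC phi_psi ltj ltm ltn).
Qed.

End SkewMonoidalAxioms.

Theorem theorem3p4 (C : opdata) (HC : is_opcat C) :
  exists (alpha : forall X Y Z : SetOver C,
                    Hom (tens (tens X Y) Z) (tens X (tens Y Z)))
         (lam : forall X : SetOver C, Hom (tens (Uob C) X) X)
         (rho : forall X : SetOver C, Hom X (tens X (Uob C))),
    [/\ alpha_formula alpha, lam_formula lam, rho_formula rho &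
        skew_monoidal alpha lam rho].
Proof.
exists (alpha HC), (@lam C), (rho HC); split.
- exact: alphaE.
- exact: lamE.
- exact: rhoE.
do !split.
- exact: tensH_id.
- exact: tensH_comp.
- exact: alpha_natural.
- exact: lam_natural.
- exact: rho_natural.
- exact: lam_rho.
- exact: lam_alpha.
- exact: alpha_rho.
- exact: lam_alpha_rho.
- exact: pentagon.
Qed.
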